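(* Let $M(s,t)=C s^{-\alpha}(t-s)^{-\beta}$ with $C>0$, $\alpha,\beta\ge 0$ (a local factor). Let $t>0$ and let $\rho\in\mathcal B^-$ be a Bruno sequence with $\rho_n<1/2$ for all $n$. Put $s_n=t\hat\rho_n$. Then the sequence $\big(M(s_{n+1},s_n)\big)_{n\ge0}$ is bounded by a geometric sequence, i.e. there exist constants $K>0$ and $q>0$ with $M(s_{n+1},s_n)\le K q^n$ for all $n$.
   Context: A Bruno sequence is a strictly positive monotone real sequence $a=(a_n)_{n\ge0}$ such that $\sum_{k\ge0}|2^{-k}\log a_k|<+\infty$; its phase is $u_n=|2^{-n}\log a_n|$. $\mathcal B^-$ is the set of Bruno sequences of the form $a_n=e^{-2^nu_n}$, $u_n\ge0$. The Bruno transform of a sequence $a$ is the sequence $\hat a$ with terms $\hat a_n=a_0^{1/2}a_1^{1/2^2}\cdots a_n^{1/2^{n+1}}$; for a Bruno sequence it converges to a strictly positive number. *)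

From Stdlib Require Import Reals.
From Coquelicot Require Import Coquelicot.
Open Scope R_scope.

Definition monotone_seq (a : nat -> R) : Prop :=
  (forall n, a n <= a (S n)) \/ (forall n, a (S n) <= a n).

Definition Bruno_seq (a : nat -> R) : Prop :=
  (forall n, 0 < a n) /\ monotone_seq a /\
  ex_series (fun k => Rabs (/ 2 ^ k * ln (a k))).

Definition Bruno_minus (a : nat -> R) : Prop :=
  Bruno_seq a /\ exists u : nat -> R,
    forall n, 0 <= u n /\ a n = exp (- (2 ^ n * u n)).

Fixpoint Bruno_transform (a : nat -> R) (n : nat) : R :=
  match n with
  | O => Rpower (a 0%nat) (/ 2)
  | S m => Bruno_transform a m * Rpower (a (S m)) (/ 2 ^ (S (S m)))
  end.

Definition local_factor (C alpha beta s t : R) : R :=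
  C * Rpower s (- alpha) * Rpower (t - s) (- beta).

(* ln hat(rho)_n is half a partial sum of the absolutely convergent series
   sum_k 2^-k ln rho_k, so hat(rho)_n stays above m = e^(-S/2), S the sum of
   that series.  Each step multiplies hat(rho)_n by rho_(n+1)^(2^-(n+2)), and
   rho_(n+1) < 1/2 makes this factor at most 1 - c 2^-n; hence
   s_n - s_(n+1) >= t m c 2^-n while s_(n+1) >= t m.  Since M is antitone in
   both s and t - s, M(s_(n+1), s_n) <= C (t m)^-alpha (t m c)^-beta (2^beta)^n. *)
From Stdlib Require Import Reals Lra.
From Coquelicot Require Import Coquelicot.
Open Scope R_scope.

Lemma exp_le (x y : R) : x <= y -> exp x <= exp y.
Proof.
  intros [Hlt | ->]; [left; apply exp_increasing; exact Hlt | right; reflexivity].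
Qed.

Lemma Rpower_pos (x p : R) : 0 < Rpower x p.
Proof. apply exp_pos. Qed.

Lemma Rle_Rpower_l_opp (x y p : R) :
  0 <= p -> 0 < x <= y -> Rpower y (- p) <= Rpower x (- p).
Proof.
  intros Hp Hxy. rewrite !Rpower_Ropp.
  apply Rinv_le_contravar; [apply Rpower_pos | apply Rle_Rpower_l; assumption].
Qed.

Lemma Rpower_pow_l (x p : R) (n : nat) :
  0 < x -> Rpower (x ^ n) p = Rpower x p ^ n.
Proof.
  intro Hx.
  rewrite <- (Rpower_pow n x Hx), Rpower_mult, Rmult_comm, <- Rpower_mult.
  apply Rpower_pow, Rpower_pos.
Qed.

Lemma ln_2_lt_1 : ln 2 < 1.
Proof.
  rewrite <- (ln_exp 1). apply ln_increasing; [lra |].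
  pose proof (exp_ineq1 1 ltac:(lra)). lra.
Qed.

Lemma one_sub_exp_opp_ge (y : R) : 0 <= y <= 1 -> y / 2 <= 1 - exp (- y).
Proof.
  intro Hy.
  assert (Hinv : exp (- y) * (1 + y) <= 1).
  { replace 1 with (exp (- y) * exp y) at 2
      by (rewrite <- exp_plus, Rplus_opp_l; apply exp_0).
    apply Rmult_le_compat_l; [left; apply exp_pos | apply exp_ineq1_le]. }
  pose proof (exp_pos (- y)).
  nra.
Qed.

Lemma one_sub_Rpower_ge (r e : R) :
  0 < r < / 2 -> 0 <= e <= 1 -> e * ln 2 / 2 <= 1 - Rpower r e.
Proof.
  intros Hr He.
  assert (Hln : ln r < - ln 2).
  { rewrite <- ln_Rinv by lra. apply ln_increasing; lra. }
  assert (Hr_e : Rpower r e <= exp (- (e * ln 2))).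
  { apply exp_le. nra. }
  pose proof ln_2_lt_1. pose proof ln_lt_2.
  pose proof (one_sub_exp_opp_ge (e * ln 2) ltac:(split; nra)).
  lra.
Qed.

Lemma sum_f_R0_le_Series (a : nat -> R) (n : nat) :
  (forall k, 0 <= a k) -> ex_series a -> sum_f_R0 a n <= Series a.
Proof.
  intros Ha Hex. rewrite <- sum_n_Reals.
  apply (is_lim_seq_incr_compare (sum_n a)); [exact (Series_correct a Hex) |].
  intro m. rewrite sum_Sn. unfold plus; simpl. pose proof (Ha (S m)). lra.
Qed.

Section BrunoTransform.

Variable rho : nat -> R.

Lemma Bruno_transform_pos (n : nat) : 0 < Bruno_transform rho n.
Proof.
  induction n as [|n IH]; simpl.
  - apply Rpower_pos.
  - apply Rmult_lt_0_compat; [exact IH | apply Rpower_pos].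
Qed.

Lemma ln_Bruno_transform (n : nat) :
  ln (Bruno_transform rho n) = sum_f_R0 (fun k => / 2 ^ k * ln (rho k)) n / 2.
Proof.
  induction n as [|n IH]; simpl.
  - rewrite ln_Rpower. simpl. field.
  - rewrite ln_mult by (apply Bruno_transform_pos || apply Rpower_pos).
    rewrite IH, ln_Rpower. simpl. field. apply pow_nonzero. lra.
Qed.

Lemma Bruno_transform_ge :
  ex_series (fun k => Rabs (/ 2 ^ k * ln (rho k))) ->
  forall n, exp (- (Series (fun k => Rabs (/ 2 ^ k * ln (rho k))) / 2))
            <= Bruno_transform rho n.
Proof.
  intros Hex n.
  rewrite <- (exp_ln _ (Bruno_transform_pos n)), ln_Bruno_transform.
  apply exp_le.
  set (a := fun k => / 2 ^ k * ln (rho k)).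
  change (fun k => Rabs (/ 2 ^ k * ln (rho k))) with (fun k => Rabs (a k)) in *.
  pose proof (sum_f_R0_triangle a n).
  pose proof (sum_f_R0_le_Series (fun k => Rabs (a k)) n (fun k => Rabs_pos _) Hex).
  pose proof (Rle_abs (- sum_f_R0 a n)). rewrite Rabs_Ropp in *.
  lra.
Qed.

Lemma Bruno_transform_step_gap (n : nat) :
  0 < rho (S n) < / 2 ->
  ln 2 / 8 * (/ 2) ^ n * Bruno_transform rho n
    <= Bruno_transform rho n - Bruno_transform rho (S n).
Proof.
  intro Hr.
  set (e := / 2 ^ S (S n)).
  assert (He : e = / 4 * (/ 2) ^ n).
  { unfold e. rewrite <- pow_inv. simpl. field. }
  assert (Hpow : 0 < (/ 2) ^ n <= 1).
  { split; [apply pow_lt; lra |].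
    destruct n as [|k]; [simpl; lra |].
    pose proof (pow_lt_1_compat (/ 2) (S k) ltac:(lra) (Nat.lt_0_succ k)). lra. }
  pose proof (one_sub_Rpower_ge (rho (S n)) e Hr ltac:(rewrite He; lra)).
  pose proof (Bruno_transform_pos n).
  change (Bruno_transform rho (S n))
    with (Bruno_transform rho n * Rpower (rho (S n)) e).
  rewrite He in *.
  nra.
Qed.

End BrunoTransform.

Lemma local_factor_le (C alpha beta s t a b : R) :
  0 <= C -> 0 <= alpha -> 0 <= beta -> 0 < a <= s -> 0 < b <= t - s ->
  local_factor C alpha beta s t <= C * Rpower a (- alpha) * Rpower b (- beta).
Proof.
  intros HC Ha Hb Has Hbt. unfold local_factor.
  pose proof (Rpower_pos s (- alpha)). pose proof (Rpower_pos (t - s) (- beta)).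
  apply Rmult_le_compat; [nra | lra | |].
  - apply Rmult_le_compat_l; [exact HC |]. apply Rle_Rpower_l_opp; assumption.
  - apply Rle_Rpower_l_opp; assumption.
Qed.

Theorem lemmaL (C alpha beta t : R) (rho : nat -> R) :
  0 < C -> 0 <= alpha -> 0 <= beta -> 0 < t ->
  Bruno_minus rho -> (forall n, rho n < / 2) ->
  exists K q : R, 0 < K /\ 0 < q /\
    forall n : nat,
      local_factor C alpha beta (t * Bruno_transform rho (S n))
                                (t * Bruno_transform rho n) <= K * q ^ n.
Proof.
  intros HC Ha Hb Ht [[Hpos [_ Hex]] _] Hhalf.
  set (m := exp (- (Series (fun k => Rabs (/ 2 ^ k * ln (rho k))) / 2))).
  set (c := t * m * (ln 2 / 8)).
  assert (Hm : 0 < m) by apply exp_pos.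
  assert (Hc : 0 < c) by (pose proof ln_lt_2; unfold c; repeat apply Rmult_lt_0_compat; lra).
  exists (C * Rpower (t * m) (- alpha) * Rpower c (- beta)), (Rpower (/ 2) (- beta)).
  split; [repeat apply Rmult_lt_0_compat; auto using Rpower_pos |].
  split; [apply Rpower_pos |].
  assert (Hlow : forall k, m <= Bruno_transform rho k) by exact (Bruno_transform_ge rho Hex).
  intro n.
  pose proof (Hlow n). pose proof (Hlow (S n)).
  pose proof (Bruno_transform_step_gap rho n (conj (Hpos (S n)) (Hhalf (S n)))) as Hgap.
  assert (Hpow : 0 < (/ 2) ^ n) by (apply pow_lt; lra).
  eapply Rle_trans.
  - apply (local_factor_le C alpha beta _ _ (t * m) (c * (/ 2) ^ n)); try lra.
    + split; [nra | apply Rmult_le_compat_l; lra].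
    + split; [apply Rmult_lt_0_compat; assumption |].
      rewrite <- Rmult_minus_distr_l.
      replace (c * (/ 2) ^ n) with (t * (ln 2 / 8 * (/ 2) ^ n * m)) by (unfold c; ring).
      apply Rmult_le_compat_l; [lra |].
      eapply Rle_trans; [| exact Hgap].
      apply Rmult_le_compat_l; [pose proof ln_lt_2 |]; nra.
  - rewrite <- (Rpower_mult_distr c ((/ 2) ^ n)), Rpower_pow_l by lra.
    right. ring.
Qed.
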